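(* For every odd $m\ge3$, the suffix array of $\bar{\mathsf{F}}_m$ is an arithmetically progressed permutation with ratio $f_{m-2}$ (and first entry $f_m$).
   Context: Fibonacci words: $\mathsf{F}_1=\mathtt{b}$, $\mathsf{F}_2=\mathtt{a}$, $\mathsf{F}_m=\mathsf{F}_{m-1}\mathsf{F}_{m-2}$ for $m\ge3$; $f_m=|\mathsf{F}_m|$. $\bar{\mathsf{F}}_m$ is $\mathsf{F}_m$ with every $\mathtt{a}$ replaced by $\mathtt{b}$ and every $\mathtt{b}$ by $\mathtt{a}$. Order $\mathtt{a}<\mathtt{b}$; lexicographic order with a proper prefix smaller than the longer string; suffix array $\mathsf{SA}_{\mathsf{T}}$: permutation of $[1..n]$ such that $\mathsf{T}[\mathsf{SA}_{\mathsf{T}}[i]..n]$ is the $i$-th smallest suffix. $x\bmod n$: representative in $[1..n]$. An arithmetically progressed permutation of length $n$ with ratio $k\in[1..n-1]$ is a permutation $P$ of $[1..n]$ with $P[i+1]=P[i]+k\bmod n$. *)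

From mathcomp Require Import all_boot.
Set Implicit Arguments. Unset Strict Implicit. Unset Printing Implicit Defensive.

(* Alphabet: letter a = false, letter b = true, so that a < b
   corresponds to false < true. *)
Definition la : bool := false.
Definition lb : bool := true.

(* Fibonacci words: F 1 = b, F 2 = a, F m = F (m-1) F (m-2) for m >= 3.
   (F 0 is an unused placeholder.) *)
Fixpoint fibw (m : nat) : seq bool :=
  match m with
  | 0 => [::]
  | 1 => [:: lb]
  | 2 => [:: la]
  | (k.+1 as m1).+1 as m2 => fibw m1 ++ fibw k
  end.

Definition fibl (m : nat) : nat := size (fibw m).

Definition compl (w : seq bool) : seq bool := map negb w.

Fixpoint lex_lt (u v : seq bool) : bool :=
  match u, v with
  | [::], [::] => false
  | [::], _ :: _ => true
  | _ :: _, [::] => false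
  | x :: u', y :: v' => (x < y) || ((x == y) && lex_lt u' v')
  end.

(* 1-indexed suff1 T[i..n] *)
Definition suff1 (T : seq bool) (i : nat) : seq bool := drop i.-1 T.

Definition at1 (P : seq nat) (i : nat) : nat := nth 0 P i.-1.

Definition is_suffix_array (T : seq bool) (P : seq nat) : Prop :=
  perm_eq P (iota 1 (size T)) /\
  forall i, 1 <= i < size T ->
    lex_lt (suff1 T (at1 P i)) (suff1 T (at1 P i.+1)).

(* x mod n with representative in [1..n] *)
Definition mod1 (x n : nat) : nat := (x + n - 1) %% n + 1.

Definition is_AP_perm (n k : nat) (P : seq nat) : Prop :=
  size P = n /\ perm_eq P (iota 1 n) /\ 1 <= k <= n - 1 /\
  forall i, 1 <= i < n -> at1 P i.+1 = mod1 (at1 P i + k) n.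

From mathcomp Require Import all_boot zify.

Lemma nat_ind2 (P : nat -> Prop) :
  P 0 -> P 1 -> (forall m, P m -> P m.+1 -> P m.+2) -> forall m, P m.
Proof.
move=> P0 P1 PS m; suff [] : P m /\ P m.+1 by [].
by elim: m => [|m [Pm Pm1]]; split => //; apply: PS.
Qed.

Lemma fibw_rec m : fibw m.+3 = fibw m.+2 ++ fibw m.+1.
Proof. by []. Qed.

Lemma fiblS m : fibl m.+2 = fibl m.+1 + fibl m.
Proof. by case: m => [|m] //; rewrite /fibl fibw_rec size_cat. Qed.

Lemma fibl_gt0 {m : nat} : 0 < m -> 0 < fibl m.
Proof.
case: m => // m _; elim/nat_ind2: m => // m IHm IHm1.
by rewrite fiblS addn_gt0 IHm1.
Qed.

(* Cassini's identity f_(m+1)^2 - f_m f_(m+2) = (-1)^m, with f_0 = 0. *)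
Lemma fibl_cassini m :
  fibl m.+1 * fibl m.+1 + odd m = fibl m * fibl m.+2 + ~~ odd m.
Proof.
elim: m => [//|m IH]; rewrite !fiblS /=.
by case: (odd m) IH; rewrite fiblS /=; nia.
Qed.

Lemma count_b_fibw m : count id (fibw m.+2) = fibl m.
Proof.
elim/nat_ind2: m => // m IHm IHm1.
by rewrite fibw_rec count_cat IHm1 IHm fiblS addnC.
Qed.

(* For odd M, f_(M+2) divides f_M^2 + 1: f_M is a square root of -1 mod f_(M+2). *)
Lemma fibl_sq_dvd {M : nat} : odd M -> fibl M.+2 %| fibl M * fibl M + 1.
Proof.
move=> M_odd; apply/dvdnP; exists (2 * fibl M - fibl M.+1).
by have := fibl_cassini M; rewrite M_odd fiblS /=; nia.
Qed.

Definition nb_prefix m p := count id (take p (fibw m)).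

(* The mechanical-word formula for F_(m+2):
   nb_prefix (m+2) p = floor(((p+1) f_m - [m odd]) / f_(m+2)). *)
Definition mechanical_count m := forall p, p <= fibl m.+2 ->
  nb_prefix m.+2 p * fibl m.+2 <= p.+1 * fibl m - odd m
  < (nb_prefix m.+2 p).+1 * fibl m.+2.

(* Arithmetic behind the induction step when the prefix lies inside F_(m+3);
   a0..a4 stand for f_m..f_(m+4) and e for [m odd]. *)
Lemma count_step_left {e : bool} {a0 a1 a2 a3 a4 p t : nat} :
  a2 = a1 + a0 -> a3 = a2 + a1 -> a4 = a3 + a2 ->
  a1 * a1 + e = a0 * a2 + ~~ e -> p <= a3 ->
  t * a3 <= p.+1 * a1 - ~~ e < t.+1 * a3 ->
  t * a4 <= p.+1 * a2 - e < t.+1 * a4.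
Proof. by move=> -> -> ->; case: e => /= C Hp /andP[H1 H2]; apply/andP; split; nia. Qed.

(* Same, when the prefix is F_(m+3) followed by a prefix of length r of F_(m+2). *)
Lemma count_step_right {e : bool} {a0 a1 a2 a3 a4 r t : nat} :
  a2 = a1 + a0 -> a3 = a2 + a1 -> a4 = a3 + a2 ->
  a1 * a1 + e = a0 * a2 + ~~ e -> r <= a2 ->
  t * a2 <= r.+1 * a0 - e < t.+1 * a2 ->
  (a1 + t) * a4 <= (a3 + r).+1 * a2 - e < (a1 + t).+1 * a4.
Proof. by move=> -> -> ->; case: e => /= C Hr /andP[H1 H2]; apply/andP; split; nia. Qed.

Lemma fibw_mechanical m : mechanical_count m.
Proof.
elim/nat_ind2: m => [||m IHm IHm1] p.
- by rewrite /nb_prefix; case: p => [|[|p]].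
- by rewrite /nb_prefix; case: p => [|[|[|p]]].
move=> Hp.
have C := fibl_cassini m.
have E2 := fiblS m; have E3 := fiblS m.+1; have E4 := fiblS m.+2.
have size3 : size (fibw m.+3) = fibl m.+3 by [].
rewrite [odd m.+2]/= negbK.
case: (leqP p (fibl m.+3)) => Hp3.
- have -> : nb_prefix m.+4 p = nb_prefix m.+3 p.
    by rewrite /nb_prefix fibw_rec takel_cat ?size3.
  exact: (count_step_left E2 E3 E4 C Hp3 (IHm1 p Hp3)).
- have -> : p = fibl m.+3 + (p - fibl m.+3) by rewrite subnKC // ltnW.
  have Hr : p - fibl m.+3 <= fibl m.+2 by rewrite leq_subLR -E4.
  have -> : nb_prefix m.+4 (fibl m.+3 + (p - fibl m.+3))
            = fibl m.+1 + nb_prefix m.+2 (p - fibl m.+3).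
    by rewrite /nb_prefix fibw_rec take_cat size3 ltnNge leq_addr addKn
               count_cat count_b_fibw.
  exact: (count_step_right E2 E3 E4 C Hr (IHm _ Hr)).
Qed.

Lemma lex_lt_irr u : lex_lt u u = false.
Proof. by elim: u => //= x u ->; rewrite ltnn eqxx. Qed.

Lemma lex_lt_asym {u v : seq bool} : lex_lt u v -> lex_lt v u -> False.
Proof. by elim: u v => [|x u IH] [|y v] //=; case: x; case: y => //=; apply: IH. Qed.

Lemma at1_range {n : nat} {P : seq nat} :
  perm_eq P (iota 1 n) -> forall i, 1 <= i <= n -> 1 <= at1 P i <= n.
Proof.
move=> permP i Hi; have : at1 P i \in iota 1 n.
  by rewrite -(perm_mem permP) mem_nth // (perm_size permP) size_iota; lia.
by rewrite mem_iota; lia.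
Qed.

Lemma decreasing_ranks n (f : nat -> nat) :
  (forall i, 1 <= i <= n -> f i < n) -> (forall i, 1 <= i < n -> f i.+1 < f i) ->
  forall i, 1 <= i <= n -> f i = n - i.
Proof.
move=> f_lt f_decr.
have upper i : 1 <= i <= n -> f i <= n - i.
  elim: i => [|[|i] IH] Hi; first lia; first by have := f_lt 1 Hi; lia.
  by have := IH ltac:(lia); have := f_decr i.+1 ltac:(lia); lia.
have lower j : j < n -> j <= f (n - j).
  elim: j => [|j IH] Hj; first lia.
  have := IH ltac:(lia); have := f_decr (n - j.+1) ltac:(lia).
  by rewrite (_ : (n - j.+1).+1 = n - j); lia.
move=> i Hi; have := upper i Hi; have := lower (n - i) ltac:(lia).
by rewrite (_ : n - (n - i) = i); lia.
Qed.

Section SuffixArrayByRank.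
Context {n : nat} {T : seq bool} {rk : nat -> nat}.
Hypotheses
  (size_T : size T = n)
  (rk_lt : forall p, 1 <= p <= n -> rk p < n)
  (rk_inj : forall p q, 1 <= p <= n -> 1 <= q <= n -> rk p = rk q -> p = q)
  (rk_lex : forall p q, 1 <= p <= n -> 1 <= q <= n -> rk q < rk p ->
     lex_lt (suff1 T p) (suff1 T q)).

Lemma suffix_array_exists : exists P, is_suffix_array T P.
Proof.
pose P := sort (fun x y => rk y <= rk x) (iota 1 n).
have permP : perm_eq P (iota 1 n) by rewrite perm_sort.
have sorted_P : sorted (fun x y => rk y <= rk x) P.
  by apply: sort_sorted => x y; apply: leq_total.
have uniqP : uniq P by rewrite (perm_uniq permP) iota_uniq.
have sizeP : size P = n by rewrite (perm_size permP) size_iota.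
exists P; split; rewrite size_T // => i Hi.
have Pi := at1_range permP i ltac:(lia); have Pi1 := at1_range permP i.+1 ltac:(lia).
have ne : at1 P i.+1 != at1 P i by rewrite /at1 /= nth_uniq ?sizeP //; lia.
have le : rk (at1 P i.+1) <= rk (at1 P i).
  have := (sortedP 0 sorted_P) i.-1; rewrite /at1 prednK; last lia.
  by apply; rewrite sizeP; lia.
apply: rk_lex => //; rewrite ltn_neqAle le andbT.
by apply: contra_neq ne; apply: rk_inj.
Qed.

Lemma suffix_array_ranks P :
  is_suffix_array T P -> forall i, 1 <= i <= n -> rk (at1 P i) = n - i.
Proof.
rewrite /is_suffix_array size_T => -[permP sortP].
apply: decreasing_ranks => [i Hi|i Hi]; first exact/rk_lt/(at1_range permP).
have Pi := at1_range permP i ltac:(lia); have Pi1 := at1_range permP i.+1 ltac:(lia).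
have lex := sortP i Hi.
case: (ltngtP (rk (at1 P i.+1)) (rk (at1 P i))) => // [gt | eq].
  by case: (lex_lt_asym lex (rk_lex _ _ Pi1 Pi gt)).
by move: lex; rewrite (rk_inj _ _ Pi1 Pi eq) lex_lt_irr.
Qed.
End SuffixArrayByRank.

(* rot n k p = (p k - 1) mod n, written without truncated subtraction. *)
Definition rot (n k p : nat) : nat := (p * k + n.-1) %% n.

Section Rotation.
Context {n k : nat}.
Hypotheses (k_gt0 : 0 < k) (k_lt_n : k < n).
Local Notation rot := (rot n k).

Let n_gt0 : 0 < n. Proof. exact: leq_ltn_trans k_lt_n. Qed.

Lemma rot_lt p : rot p < n.
Proof. exact: ltn_pmod. Qed.

Lemma rot_n : rot n = n.-1.
Proof. by rewrite /rot mulnC modnMDl modn_small // prednK. Qed.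

Lemma rot_le_n p : rot p <= rot n.
Proof. by rewrite rot_n -ltnS prednK ?rot_lt. Qed.

Lemma rot_mod p : rot p + 1 = p * k %[mod n].
Proof. by rewrite /rot modnDml -addnA addn1 prednK // modnDr. Qed.

Lemma rot_succ p :
  rot p.+1 = if rot p + k < n then rot p + k else rot p + k - n.
Proof.
have -> : rot p.+1 = (rot p + k) %% n by rewrite /rot modnDml mulSnr addnAC.
case: ltnP => [lt_n | ge_n]; first exact: modn_small.
rewrite -{1}(subnK ge_n) modnDr modn_small //.
by have := rot_lt p; lia.
Qed.

Lemma mod1_range x : 1 <= mod1 x n <= n.
Proof. by rewrite /mod1 addn1 /= ltn_pmod. Qed.

Section RotationCoding.
Context {T : seq bool}.
Hypotheses (size_T : size T = n)
  (letter_T : forall p, 1 <= p <= n -> nth false T p.-1 = (rot p + k < n)).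

Lemma suff1_cons p : 1 <= p <= n -> suff1 T p = nth false T p.-1 :: suff1 T p.+1.
Proof. by move=> Hp; rewrite /suff1 (drop_nth false) ?size_T prednK //; lia. Qed.

(* Induction on n - p: equal first letters keep the order of the rotated
   values, different first letters decide the comparison, and the last
   suffix, the single letter a, is the smallest suffix. *)
Lemma rot_lex p q : 1 <= p <= n -> 1 <= q <= n -> rot q < rot p ->
  lex_lt (suff1 T p) (suff1 T q).
Proof.
move Hj : (n - p) => j; elim: j p q Hj => [|j IH] p q Hj Hp Hq lt_pq;
  have lt_qn : q < n by have := rot_le_n p; case: (eqVneq q n) lt_pq => [->|]; lia.
  have -> : p = n by lia.
  rewrite (suff1_cons n) ?(suff1_cons q) ?letter_T ?rot_n //; [|lia..].
  have -> : suff1 T n.+1 = [::] by rewrite /suff1 drop_oversize ?size_T.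
  rewrite (suff1_cons q.+1); last lia.
  by rewrite /= (_ : n.-1 + k < n = false); [case: (_ < n)|lia].
have step_lex : (rot p + k < n) = (rot q + k < n) ->
    lex_lt (suff1 T p.+1) (suff1 T q.+1).
  move=> same; apply: IH; try lia.
  by rewrite !rot_succ -same; case: ifP; lia.
rewrite (suff1_cons p) ?(suff1_cons q) ?letter_T /=; [|lia..].
case: (ltnP (rot p + k) n) => [lt_p | ge_p].
  have lt_q : rot q + k < n by lia.
  by rewrite lt_q eqxx step_lex ?orbT // lt_p lt_q.
case: (ltnP (rot q + k) n) => [//| ge_q] /=.
by rewrite step_lex // !ltnNge ge_p ge_q.
Qed.
End RotationCoding.

(* When k^2 = -1 (mod n), rot is a bijection and x |-> x + k decrements it. *)
Section SquareRootOfMinusOne.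
Hypothesis n_dvd : n %| k * k + 1.

(* If n | (q - p) k then n | (q - p) k^2 and n | (q - p)(k^2 + 1), so n | q - p. *)
Lemma rot_inj p q : 1 <= p <= n -> 1 <= q <= n -> rot p = rot q -> p = q.
Proof.
wlog le_pq : p q / p <= q.
  by move=> W Hp Hq E; case: (leqP p q) => [|/ltnW] H; [|symmetry]; apply: W.
move=> Hp Hq /eqP; rewrite eqn_modDr eq_sym eqn_mod_dvd ?leq_mul2r ?le_pq ?orbT //.
rewrite -mulnBl => n_dvd_k.
have n_dvd_diff : n %| q - p.
  have : n %| (q - p) * (k * k + 1) by exact: dvdn_mull.
  by rewrite mulnDr muln1 mulnA dvdn_addr // dvdn_mulr.
case: (posnP (q - p)) => [|pos]; first lia.
by have := dvdn_leq pos n_dvd_diff; lia.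
Qed.

(* (x + k) k - 1 = x k + (k^2 + 1) - 2 = x k - 2 (mod n). *)
Lemma rot_shift x : 0 < rot x -> rot (mod1 (x + k) n) = (rot x).-1.
Proof.
move=> rot_gt0; set y := mod1 (x + k) n.
have kk0 : k * k + 1 = 0 %[mod n] by apply/eqP; rewrite mod0n -/(dvdn _ _).
have Ey : y = x + k %[mod n].
  by rewrite /y /mod1 modnDml subnK ?modnDr //; lia.
have rot_y : rot y + 2 = x * k %[mod n].
  rewrite -[2]/(1 + 1) addnA -modnDml rot_mod modnDml.
  rewrite -modnDml -modnMml Ey modnMml modnDml.
  by rewrite mulnDl -addnA -modnDmr kk0 mod0n addn0.
have : rot y + 2 = (rot x).-1 + 2 %[mod n].
  by rewrite rot_y addn2 prednK // -addn1 rot_mod.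
by move/eqP; rewrite eqn_modDr !modn_small // ?rot_lt //; have := rot_lt x; lia.
Qed.

Lemma rank_AP P : perm_eq P (iota 1 n) ->
  (forall i, 1 <= i <= n -> rot (at1 P i) = n - i) ->
  is_AP_perm n k P /\ at1 P 1 = n.
Proof.
move=> permP rankP; have P_range := at1_range permP.
have first : at1 P 1 = n.
  by apply: rot_inj; [apply: P_range; lia | lia | rewrite rankP ?rot_n; lia].
split=> //; split; first by rewrite (perm_size permP) size_iota.
split=> //; split=> [|i Hi]; first lia.
apply: rot_inj; [apply: P_range; lia | exact: mod1_range |].
by rewrite rot_shift !rankP //; lia.
Qed.
End SquareRootOfMinusOne.
End Rotation.

(* For odd M, F_(M+2) codes the rotation by f_M on Z/f_(M+2): its p-th letter
   is b iff rot p + f_M >= f_(M+2); it is the increment of the mechanical count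
   floor((p f_M - 1 + f_M) / f_(M+2)) - floor((p f_M - 1) / f_(M+2)). *)
Lemma fibw_letter M p : odd M -> 1 <= p <= fibl M.+2 ->
  nth false (fibw M.+2) p.-1 = (fibl M.+2 <= rot (fibl M.+2) (fibl M) p + fibl M).
Proof.
move=> M_odd Hp.
have k_gt0 : 0 < fibl M by exact: fibl_gt0 (odd_gt0 M_odd).
have H0 := fibw_mechanical M p.-1 ltac:(lia).
have H1 := fibw_mechanical M p ltac:(lia).
rewrite M_odd prednK in H0 H1; last lia.
have count_succ : nb_prefix M.+2 p = nb_prefix M.+2 p.-1 + nth false (fibw M.+2) p.-1.
  rewrite /nb_prefix -{1}(prednK (n := p)); last lia.
  rewrite (take_nth false); last by rewrite -/(fibl M.+2); lia.
  by rewrite -cats1 count_cat /= addn0.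
rewrite count_succ /rot in H1 *.
move: (nb_prefix M.+2 p.-1) (nth _ _ _) (fibl M.+2) (fibl M) H0 H1 k_gt0
  => c b n k H0 H1 k_gt0.
have pk_gt0 : 0 < p * k by rewrite muln_gt0; lia.
rewrite !mulSn in H0 H1.
have -> : (p * k + n.-1) %% n = p * k - 1 - c * n.
  rewrite (_ : p * k + n.-1 = c.+1 * n + (p * k - 1 - c * n)); last by rewrite mulSn; lia.
  by rewrite modnMDl modn_small; lia.
case: b H1 => /= H1; rewrite ?addn1 ?addn0 ?mulSn in H1; apply/esym; first by lia.
by apply/negbTE; rewrite -ltnNge; lia.
Qed.

Theorem mainTheorem17 (m : nat) :
  3 <= m -> odd m ->
  (exists P, is_suffix_array (compl (fibw m)) P) /\
  (forall P, is_suffix_array (compl (fibw m)) P ->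
     is_AP_perm (fibl m) (fibl (m - 2)) P /\ at1 P 1 = fibl m).
Proof.
case: m => [|[|M]] // _; rewrite subn2 /= negbK => M_odd.
set n := fibl M.+2; set k := fibl M; set T := compl (fibw M.+2).
have k_gt0 : 0 < k := fibl_gt0 (odd_gt0 M_odd).
have k_lt_n : k < n by rewrite /n fiblS -{1}(add0n k) ltn_add2r fibl_gt0.
have n_dvd : n %| k * k + 1 := fibl_sq_dvd M_odd.
have size_T : size T = n by rewrite size_map.
have letter_T p : 1 <= p <= n -> nth false T p.-1 = (rot n k p + k < n).
  move=> Hp; have p_lt : p.-1 < size (fibw M.+2) by rewrite -/(fibl M.+2) -/n; lia.
  by rewrite (nth_map false _ _ p_lt) fibw_letter // ltnNge.
have rk_inj := rot_inj k_gt0 k_lt_n n_dvd.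
have rk_lex := rot_lex k_gt0 k_lt_n size_T letter_T.
split; first exact: (suffix_array_exists size_T rk_inj rk_lex).
move=> P SA; apply: rank_AP => //; first by case: SA; rewrite size_T.
exact: (suffix_array_ranks size_T (fun p _ => rot_lt k_lt_n p) rk_inj rk_lex _ SA).
Qed.
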